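(* Let ${\bf r}=(r_0,r_1,\dots)$ be a finitely supported sequence of nonnegative integers with $n=\sum_{d\ge1}r_d\ge1$ and $\ell=-\sum_{d\ge0}(d-1)r_d\ge1$, let $k\ge0$ be an integer, and let ${\bf S}\in V_{\bf r}$. Then $$|\mathcal{CF}_{{\bf r},k,{\bf S}}|=\ell\,1^{r_1}2^{r_2}3^{r_3}\cdots\prod_{i=1}^{n-1}\big(r_0+i(1+k)\big).$$
   Context: A plane tree is an unlabelled rooted tree in which the children of every vertex are linearly ordered; a plane forest is a finite linearly ordered sequence of plane trees. For vertices $u,v$ in a tree, $v$ is a descendant of $u$ if $u$ lies on the path from the root to $v$ (so $u$ is a descendant of itself). The degree $d_v$ is the number of children of $v$; $v$ is internal if $d_v\ge1$. $I(F)$ is the set of internal vertices of $F$. A plane forest has type ${\bf r}$ if it has exactly $r_i$ vertices of degree $i$ for all $i\ge0$. A labelled forest is a plane forest $F$ together with a bijection (labelling) $I(F)\to[n]$. An internal vertex $v$ of a labelled forest is proper if no internal descendant of $v$ has a smaller label than $v$, and improper otherwise. Fix colors $c_1,c_2,\dots$ and distinct special colors $c_1',c_2',\dots$. A proper $k$-coloring of a labelled forest assigns to each internal vertex $v$ a color, taken from $\{c_1,\dots,c_{d_v}\}$ if $v$ is proper and from $\{c_1,\dots,c_{d_v}\}\cup\{c_1',\dots,c_k'\}$ if $v$ is improper. A $k$-colored labelled forest is a labelled forest together with a proper $k$-coloring; $\mathcal{CF}_{{\bf r},k}$ is the set of $k$-colored labelled forests whose underlying plane forest has type ${\bf r}$.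 $V_{\bf r}$ is the set of sequences ${\bf S}=(S_1,S_2,\dots)$ of pairwise disjoint subsets of $[n]$ with union $[n]$ and $|S_i|=r_i$ for all $i\ge1$. For ${\bf S}\in V_{\bf r}$, $\mathcal{CF}_{{\bf r},k,{\bf S}}$ is the set of forests in $\mathcal{CF}_{{\bf r},k}$ in which every internal vertex $v$ has its label in $S_{d_v}$. *)

From mathcomp Require Import all_boot all_algebra.
Set Implicit Arguments. Unset Strict Implicit. Unset Printing Implicit Defensive.
Import GRing.Theory Num.Theory.

(* Colors: [Ord j] is c_j, [Spec j] is the special color c'_j (j >= 1). *)
Inductive color := Ord of nat | Spec of nat.

(* For leaves the decoration is meaningless and is
   forced to the canonical value (label 0, color Ord 0) by [wf_leaves], so
   that decorated forests correspond bijectively to colored labelled forests. *)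
Inductive dtree := DNode of nat & color & seq dtree.

Definition dlabel (t : dtree) := let: DNode l _ _ := t in l.
Definition dcolor (t : dtree) := let: DNode _ c _ := t in c.
Definition dchildren (t : dtree) := let: DNode _ _ ch := t in ch.
Definition ddeg (t : dtree) := size (dchildren t).
Definition internal (t : dtree) := 0 < ddeg t.

(* All vertices of a tree (each vertex represented by the subtree it roots),
   listed with multiplicity; the first one is the root. *)
Fixpoint subtrees (t : dtree) : seq dtree :=
  let: DNode _ _ ch := t in t :: flatten (map subtrees ch).

Definition fvertices (F : seq dtree) : seq dtree := flatten (map subtrees F).

Definition proper (v : dtree) : bool :=
  all (fun u => dlabel v <= dlabel u) (filter internal (subtrees v)).

Definition rr (r : seq nat) (i : nat) : nat := nth 0 r i.

Definition n_of (r : seq nat) : nat := \sum_(1 <= d < size r) rr r d.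

Definition ell_of (r : seq nat) : int :=
  (- \sum_(0 <= d < size r) ((d%:Z - 1) * (rr r d)%:Z))%R.

(* S = (S_1, S_2, ...) in V_r ; S 0 is ignored *)
Definition inV (r : seq nat) (S : nat -> pred nat) : Prop :=
  [/\ (forall i j x, 1 <= i -> 1 <= j -> i != j -> S i x -> S j x -> False),
      (forall x, (exists2 i, 1 <= i & S i x) <-> (1 <= x <= n_of r)) &
      (forall i, 1 <= i -> count (S i) (iota 1 (n_of r)) = rr r i)].

Definition color_ok (k : nat) (v : dtree) : bool :=
  match dcolor v with
  | Ord j => (1 <= j <= ddeg v)
  | Spec j => (1 <= j <= k) && ~~ proper v
  end.

Definition CF (r : seq nat) (k : nat) (S : nat -> pred nat) (F : seq dtree) : Prop :=
  let V := fvertices F in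
  [/\
      all (fun v => internal v || ((dlabel v == 0) && (if dcolor v is Ord 0 then true else false)))
          [seq v <- V | ~~ internal v] ,
      (forall i, count (fun v => ddeg v == i) V = rr r i),
      perm_eq (map dlabel (filter internal V)) (iota 1 (n_of r)),
      all (color_ok k) (filter internal V) &
      all (fun v => S (ddeg v) (dlabel v)) (filter internal V)].

Definition has_card (T : Type) (P : T -> Prop) (N : nat) : Prop :=
  exists e : 'I_N -> T, injective e /\ (forall x, P x <-> exists i, e i = x).

From Pilot Require Import Defs.
From HB Require Import structures.
From mathcomp Require Import all_boot all_algebra zify ring.
Import GRing.Theory Num.Theory.
Set Implicit Arguments. Unset Strict Implicit. Unset Printing Implicit Defensive.

(* Write w(x) for the d with x in S_d.  A forest of CF_{r,k,S} is then exactly a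
   forest of ell trees whose internal vertex labelled x has w(x) children (its
   type is forced: it has the right number of internal vertices of each degree,
   and counting edges shows that it has r_0 leaves precisely when it has ell
   trees).  Forests of l trees with label set L are counted by induction on L,
   with m the smallest label.  Cyclic rotation of the trees shows that the
   forests with m in one of their first j trees are j times as many as those
   with m in the first tree.  Removing the root lam of the first tree of such a
   forest leaves a forest of l + w(lam) - 1 trees on L minus lam, in which m lies
   in one of the first w(lam) trees unless lam = m; the root is proper exactly
   when lam = m, so it has w(lam) admissible colors in that case and w(lam) + k
   otherwise.  Summing over lam gives the product formula. *)

Section Counting.
Variable T : eqType.

Definition enumerates (P : pred T) (s : seq T) := uniq s /\ forall x, P x = (x \in s).
Definition counts (P : pred T) (N : nat) := exists2 s, enumerates P s & size s = N.

Lemma eq_counts (P Q : pred T) N : P =1 Q -> counts P N -> counts Q N.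
Proof. by move=> PQ [s [us Ps] <-]; exists s; split=> // x; rewrite -PQ. Qed.

Lemma counts1 (x : T) : counts (pred1 x) 1.
Proof. by exists [:: x]; split=> // y; rewrite inE. Qed.

Lemma counts_image2 (X : eqType) (A : seq X) (f : X -> T -> T) (P Q : pred T) N :
  uniq A -> counts P N ->
  (forall a a' F F', a \in A -> a' \in A -> P F -> P F' ->
     f a F = f a' F' -> a = a' /\ F = F') ->
  (forall G, reflect (exists a F, [/\ a \in A, P F & G = f a F]) (Q G)) ->
  counts Q (size A * N).
Proof.
move=> uA [s [us Ps] <-] f_inj QP; exists [seq f a F | a <- A, F <- s].
  split=> [|G].
    apply: allpairs_uniq => // -[a F] [a' F'] /allpairsP [[b E] [bA Es [-> ->]]].
    move=> /allpairsP [[b' E'] [bA' Es' [-> ->]]] /= /f_inj.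
    by rewrite !Ps => /(_ bA bA' Es Es') [-> ->].
  apply/QP/allpairsP => [[a [F [aA PF ->]]] | [[a F] [aA sF ->]]].
    by exists (a, F); rewrite -Ps.
  by exists a, F; rewrite Ps.
by rewrite size_allpairs.
Qed.

Lemma counts_has (I : eqType) (J : seq I) (P : I -> pred T) (N : I -> nat) :
  uniq J -> (forall i j x, P i x -> P j x -> i = j) ->
  (forall i, i \in J -> counts (P i) (N i)) ->
  counts (fun x => has (P^~ x) J) (\sum_(i <- J) N i).
Proof.
move=> + P_disj; elim: J => [_ _ | i J IH /= /andP [iJ uJ] cP].
  by exists [::]; rewrite ?big_nil.
have [s [us Ps] sN] := cP i (mem_head _ _).
have [t [ut Pt] tN] := IH uJ (fun j jJ => cP j (@mem_behead _ (i :: J) j jJ)).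
exists (s ++ t); last by rewrite big_cons size_cat sN tN.
split=> [|x]; last by rewrite mem_cat -Ps -Pt.
rewrite cat_uniq us ut andbT; apply/hasP => -[x]; rewrite -Pt -Ps => /hasP [j jJ Pjx] Pix.
by move: iJ; rewrite (P_disj _ _ _ Pix Pjx) jJ.
Qed.

Lemma counts_has_card (P : T -> Prop) (Pb : pred T) N :
  (forall x, P x <-> Pb x) -> counts Pb N -> has_card P N.
Proof.
move=> PPb [s [us Ps] <-]; exists (tnth (in_tuple s)); split; first exact/tuple_uniqP.
move=> x; rewrite PPb Ps; split=> [/(tnthP (in_tuple s)) [i ->] | [i <-]].
  by exists i.
exact: mem_tnth.
Qed.
End Counting.

Section Fibers.
Variables (R : Type) (idx : R) (op : Monoid.com_law idx).
Variables (I J : eqType) (v : I -> J) (F : J -> R).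

Lemma big_fibers (s : seq I) (ds : seq J) : uniq ds -> {in s, forall x, v x \in ds} ->
  \big[op/idx]_(x <- s) F (v x) =
  \big[op/idx]_(d <- ds) iter (count (fun x => v x == d) s) (op (F d)) idx.
Proof.
move=> uds sv.
transitivity (\big[op/idx]_(x <- s) \big[op/idx]_(d <- ds) if v x == d then F d else idx).
  rewrite !big_seq; apply: eq_bigr => x /sv vx.
  rewrite (bigD1_seq (v x)) //= eqxx big1 ?Monoid.mulm1 // => d.
  by rewrite eq_sym => /negbTE ->.
by rewrite exchange_big; apply: eq_bigr => d _; rewrite -big_mkcond big_const_seq.
Qed.
End Fibers.

Lemma exists_min (s : seq nat) :
  s != [::] -> exists2 m, m \in s & {in s, forall x, m <= x}.
Proof.
elim: s => // a [|b s] IH _; first by exists a => [|x]; rewrite ?inE // => /eqP ->.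
have [m' m's m'_min] := IH isT; exists (minn a m').
  by rewrite inE; case: leqP => _; rewrite ?eqxx ?m's ?orbT.
move=> x; rewrite inE => /predU1P [-> | /m'_min]; first exact: geq_minl.
exact: leq_trans (geq_minr a m').
Qed.

Definition color_to_sum (c : color) : nat + nat :=
  match c with Ord j => inl j | Spec j => inr j end.
Definition sum_to_color (s : nat + nat) : color :=
  match s with inl j => Ord j | inr j => Spec j end.
Lemma color_to_sumK : cancel color_to_sum sum_to_color. Proof. by case. Qed.
HB.instance Definition _ := Equality.copy color (can_type color_to_sumK).

Lemma Ord_inj : injective Ord. Proof. by move=> ? ? []. Qed.
Lemma Spec_inj : injective Spec. Proof. by move=> ? ? []. Qed.

Fixpoint dtree_nested_rect (P : dtree -> Type) (Q : seq dtree -> Type)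
    (hnode : forall l c ch, Q ch -> P (DNode l c ch)) (hnil : Q [::])
    (hcons : forall t F, P t -> Q F -> Q (t :: F)) (t : dtree) : P t :=
  let: DNode l c ch := t in
  hnode l c ch ((fix forest (F : seq dtree) : Q F :=
    if F is t :: F' then hcons t F' (dtree_nested_rect hnode hnil hcons t) (forest F')
    else hnil) ch).

Fixpoint dtree_encode (t : dtree) : GenTree.tree (nat * color) :=
  let: DNode l c ch := t in GenTree.Node 0 (GenTree.Leaf (l, c) :: map dtree_encode ch).
Fixpoint dtree_decode (t : GenTree.tree (nat * color)) : option dtree :=
  if t is GenTree.Node _ (GenTree.Leaf (l, c) :: ts)
  then Some (DNode l c (pmap dtree_decode ts)) else None.
Lemma dtree_encodeK : pcancel dtree_encode dtree_decode.
Proof.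
by apply: (dtree_nested_rect (Q := fun F => pmap dtree_decode (map dtree_encode F) = F))
  => [l c ch /= -> | | t F /= -> ->].
Qed.
HB.instance Definition _ := Equality.copy dtree (pcan_type dtree_encodeK).

Definition leaf := DNode 0 (Ord 0) [::].

Lemma leaf_canonical v : ~~ internal v ->
  (dlabel v == 0) && (if dcolor v is Ord 0 then true else false) = (v == leaf).
Proof.
case: v => l c [] // _; apply/idP/eqP => [| [-> ->] //].
by case: c => [[|?]|?] /=; rewrite ?andbF // andbT => /eqP ->.
Qed.

Lemma fvertices_cons t F : fvertices (t :: F) = subtrees t ++ fvertices F.
Proof. by []. Qed.

Lemma fvertices_cat F G : fvertices (F ++ G) = fvertices F ++ fvertices G.
Proof. by rewrite /fvertices map_cat flatten_cat. Qed.

Lemma fvertices_rot n F : perm_eq (fvertices (rot n F)) (fvertices F).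
Proof. by rewrite /rot fvertices_cat perm_catC -fvertices_cat cat_take_drop. Qed.

Lemma size_subtrees t : size (subtrees t) = 1 + \sum_(v <- subtrees t) ddeg v.
Proof.
apply: (dtree_nested_rect
  (P := fun t => size (subtrees t) = 1 + \sum_(v <- subtrees t) ddeg v)
  (Q := fun F => size (fvertices F) = size F + \sum_(v <- fvertices F) ddeg v)).
- by move=> l c ch IH; rewrite /= big_cons -/(fvertices ch) IH.
- by rewrite big_nil.
- by move=> t' F Ht HF; rewrite fvertices_cons size_cat big_cat /= Ht HF; lia.
Qed.

Lemma size_fvertices F : size (fvertices F) = size F + \sum_(v <- fvertices F) ddeg v.
Proof.
by have /eqP := size_subtrees (DNode 0 (Ord 0) F); rewrite /= big_cons eqSS => /eqP.
Qed.

Definition labels (F : seq dtree) := map dlabel (filter internal (fvertices F)).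

Lemma labels_cat F G : labels (F ++ G) = labels F ++ labels G.
Proof. by rewrite /labels fvertices_cat filter_cat map_cat. Qed.

Lemma labels_cons t F : labels (t :: F) = labels [:: t] ++ labels F.
Proof. by rewrite -labels_cat. Qed.

Lemma labels_node l c ch :
  labels [:: DNode l c ch] = if ch is [::] then [::] else l :: labels ch.
Proof. by rewrite /labels /= cats0; case: ch. Qed.

Lemma mem_labels m F : (m \in labels F) = has (fun t => m \in labels [:: t]) F.
Proof. by elim: F => [|t F IH] //; rewrite labels_cons mem_cat IH. Qed.

Lemma labels_rot n F : perm_eq (labels (rot n F)) (labels F).
Proof. exact/perm_map/perm_filter/fvertices_rot. Qed.

Lemma proper_node l c ch : Defs.proper (DNode l c ch) = all (leq l) (labels ch).
Proof. by rewrite /Defs.proper /labels all_map /=; case: ifP => //= _; rewrite leqnn. Qed.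

Definition colors (k d : nat) (is_proper : bool) : seq color :=
  [seq Ord i | i <- iota 1 d] ++
  (if is_proper then [::] else [seq Spec i | i <- iota 1 k]).

Lemma color_okE k v : color_ok k v = (dcolor v \in colors k (ddeg v) (Defs.proper v)).
Proof.
have OS j s : (Ord j \in [seq Spec i | i <- s]) = false by apply/mapP => -[].
have SO j s : (Spec j \in [seq Ord i | i <- s]) = false by apply/mapP => -[].
rewrite /color_ok /colors mem_cat; case: (dcolor v) => j; case: Defs.proper;
  by rewrite /= ?(mem_map Ord_inj) ?(mem_map Spec_inj) ?mem_iota ?OS ?SO ?in_nil
             ?orbF ?andbF ?andbT.
Qed.

Lemma size_colors k d p : size (colors k d p) = d + (if p then 0 else k).
Proof.
by rewrite size_cat size_map size_iota; case: p; rewrite /= ?size_map ?size_iota.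
Qed.

Lemma uniq_colors k d p : uniq (colors k d p).
Proof.
rewrite cat_uniq map_inj_uniq ?iota_uniq //; last exact: Ord_inj.
case: p => //=; rewrite map_inj_uniq ?iota_uniq ?andbT //; last exact: Spec_inj.
by apply/hasPn => _ /mapP [j _ ->]; apply/mapP => -[].
Qed.

Section WeightedForests.
Variables (k : nat) (w : nat -> nat).

Definition ok_vertex (v : dtree) : bool :=
  if internal v then (ddeg v == w (dlabel v)) && color_ok k v else v == leaf.

Definition wforest (L : seq nat) (l : nat) (F : seq dtree) : bool :=
  [&& all ok_vertex (fvertices F), perm_eq (labels F) L & size F == l].

Definition marked (L : seq nat) (l m j : nat) (F : seq dtree) : bool :=
  wforest L l F && (m \in labels (take j F)).

Lemma marked_full L l m F : m \in L -> marked L l m l F = wforest L l F.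
Proof.
move=> mL; rewrite /marked; case wF: wforest => //=.
by case/and3P: wF => _ labF /eqP <-; rewrite take_size (perm_mem labF).
Qed.

Lemma wforest_rot L l n F : wforest L l (rot n F) = wforest L l F.
Proof.
by rewrite /wforest size_rot (perm_all _ (fvertices_rot n F)) (permPl (labels_rot n F)).
Qed.

Lemma wforest_nil l F : wforest [::] l F = (F == nseq l leaf).
Proof.
apply/idP/eqP => [/and3P [okF /perm_nilP noint /eqP <-] | ->].
  apply/all_pred1P/allP => t tF; have tV : t \in fvertices F.
    apply/flattenP; exists (subtrees t); first exact: map_f.
    by case: t {tF} => ? ? ?; rewrite inE eqxx.
  move/allP/(_ t tV): okF; rewrite /ok_vertex; case: ifP => // tint.
  suff : dlabel t \in labels F by rewrite noint.
  by apply: map_f; rewrite mem_filter tint.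
have fvF : fvertices (nseq l leaf) = nseq l leaf.
  by elim: l => // l IH; rewrite /= fvertices_cons IH.
by rewrite /wforest {}fvF size_nseq /labels all_nseq /= eqxx orbT; elim: l.
Qed.

Section Rotation.
Variables (L : seq nat) (l m : nat).
Hypothesis uL : uniq L.
Local Notation has_m := (fun t => m \in labels [:: t]).

Lemma marked1_split F : marked L l m 1 F ->
  exists t F', [/\ F = t :: F', has_m t, m \notin labels F' & size F = l].
Proof.
case: F => [|t F' /andP [/and3P [_ labF /eqP sizeF]]]; first by rewrite /marked andbF.
rewrite /= take0 => mt; exists t, F'; split=> //.
move: labF => /perm_uniq; rewrite uL labels_cons cat_uniq => /and3P [_ /hasPn mF' _].
by apply/negP => /mF'; rewrite mt.
Qed.

Lemma find_rotr_marked1 F p : marked L l m 1 F -> p < l -> find has_m (rotr p F) = p.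
Proof.
case/marked1_split=> t [F' [-> mt mF' sizeF] pl].
have lp : l - p = (l - p).-1.+1 by rewrite prednK // subn_gt0.
have nhas : has has_m (drop (l - p) (t :: F')) = false.
  rewrite lp /=; apply: contraNF mF' => /hasP [u /mem_drop uF' mu].
  by rewrite mem_labels; apply/hasP; exists u.
by rewrite /rotr sizeF /rot find_cat nhas size_drop sizeF lp /= mt addn0; lia.
Qed.

(* Rotation by [p < j] moves the tree containing [m] from the front to position [p]. *)
Lemma counts_marked j N : j <= l -> counts (marked L l m 1) N ->
  counts (marked L l m j) (j * N).
Proof.
move=> jl c1; rewrite -[j in j * N](size_iota 0 j).
apply: (counts_image2 (f := @rotr _) (Q := marked L l m j) (iota_uniq 0 j) c1).
  move=> p p' F F'; rewrite !mem_iota /= => pj p'j F1 F'1 E.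
  have [pl p'l] : p < l /\ p' < l by lia.
  have pp' : p = p' by rewrite -(find_rotr_marked1 F1 pl) E (find_rotr_marked1 F'1 p'l).
  by move: E; rewrite pp' => /rotr_inj.
move=> G; apply: (iffP idP) => [/andP [wG] | [p [F [pj F1 ->]]]].
  rewrite mem_labels => mG.
  have hG : has has_m G by case/hasP: mG => t /mem_take tG mt; apply/hasP; exists t.
  move: mG; rewrite has_take // => fj.
  exists (find has_m G), (rot (find has_m G) G); split; last by rewrite rotK.
    by rewrite mem_iota add0n fj.
  rewrite /marked wforest_rot wG /= /rot (drop_nth leaf) -?has_find //= take0.
  exact: (nth_find leaf hG).
have [wF _] := andP F1; have pj' : p < j by rewrite mem_iota in pj.
have pl : p < l by apply: leq_trans jl.
rewrite /marked /rotr wforest_rot wF mem_labels has_take ?find_rotr_marked1 //.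
by case/marked1_split: F1 => t [F' [-> mt _ _]]; rewrite has_rot /= mt.
Qed.
End Rotation.

Definition graft lam c F := DNode lam c (take (w lam) F) :: drop (w lam) F.

Lemma fvertices_graft lam c F :
  fvertices (graft lam c F) = DNode lam c (take (w lam) F) :: fvertices F.
Proof. by rewrite fvertices_cons /= -fvertices_cat cat_take_drop. Qed.

Lemma labels_root lam c F : 0 < w lam <= size F ->
  labels [:: DNode lam c (take (w lam) F)] = lam :: labels (take (w lam) F).
Proof.
case/andP=> w_gt0 wF; rewrite labels_node; case E: take => //.
by move: (size_takel wF); rewrite E /=; lia.
Qed.

Lemma labels_graft lam c F : 0 < w lam <= size F ->
  labels (graft lam c F) = lam :: labels F.
Proof. by move=> wF; rewrite labels_cons labels_root //= -labels_cat cat_take_drop. Qed.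

Definition nmarked1 l L :=
  \prod_(x <- L) w x * \prod_(1 <= i < size L) (l + \sum_(x <- L) (w x).-1 + i * k.+1).

Section Graft.
Variables (L : seq nat) (l m : nat).
Hypotheses (uL : uniq L) (mL : m \in L) (m_min : {in L, forall x, m <= x})
  (w_gt0 : {in L, forall x, 0 < w x}) (l_gt0 : 0 < l).

Definition pruned lam F := wforest (rem lam L) (l + w lam - 1) F &&
  ((lam == m) || (m \in labels (take (w lam) F))).

Lemma proper_graft lam c F : lam \in L -> perm_eq (labels F) (rem lam L) ->
  (lam == m) || (m \in labels (take (w lam) F)) ->
  Defs.proper (DNode lam c (take (w lam) F)) = (lam == m).
Proof.
move=> lL labF; rewrite proper_node.
have labT : {subset labels (take (w lam) F) <= rem lam L}.
  move=> x; rewrite -(perm_mem labF) -{2}(cat_take_drop (w lam) F) labels_cat mem_cat.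
  by move=> ->.
case: eqVneq => [lm _ | lm /= mT].
  by subst lam; apply/allP => x /labT /mem_rem /m_min.
by apply/allP => /(_ m mT); have := m_min lL; lia.
Qed.

Lemma marked1_graft lam c F : lam \in L -> w lam <= size F ->
  marked L l m 1 (graft lam c F) = (c \in colors k (w lam) (lam == m)) && pruned lam F.
Proof.
move=> lL wF; have wF' : 0 < w lam <= size F by rewrite w_gt0.
rewrite /marked /pruned /wforest fvertices_graft labels_graft // /graft /= take0.
rewrite labels_root // (permPr (perm_to_rem lL)) perm_cons size_drop.
have ok_root : ok_vertex (DNode lam c (take (w lam) F)) =
    (c \in colors k (w lam) (Defs.proper (DNode lam c (take (w lam) F)))).
  by rewrite /ok_vertex color_okE /internal /ddeg /= size_takel // (w_gt0 lL) eqxx.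
have -> : ((size F - w lam).+1 == l) = (size F == l + w lam - 1) by apply/eqP/eqP; lia.
rewrite ok_root in_cons [m == lam]eq_sym.
case labF: perm_eq; last by rewrite !andbF.
case mT: ((lam == m) || (m \in labels (take (w lam) F))); last by rewrite !andbF.
by rewrite (proper_graft c lL labF mT) !andbT -andbA.
Qed.

Lemma pruned_size lam F : pruned lam F -> w lam <= size F.
Proof. by case/andP=> /and3P [_ _ /eqP ->] _; lia. Qed.

Lemma counts_marked1_root lam N : lam \in L -> counts (pruned lam) N ->
  counts (fun G => marked L l m 1 G && (dlabel (head leaf G) == lam))
         (size (colors k (w lam) (lam == m)) * N).
Proof.
move=> lL cN; apply: (counts_image2 (f := graft lam) (uniq_colors _ _ _) cN).
  move=> c c' F F' _ _ _ _ [-> Etake Edrop].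
  by rewrite -[F](cat_take_drop (w lam)) Etake Edrop cat_take_drop.
move=> G; apply: (iffP andP) => [[mG] | [c [F [cC pF ->]]]]; last first.
  by rewrite marked1_graft ?cC ?pF ?pruned_size //= eqxx.
case: G mG => [|[lam' c ch] G] mG; first by case/andP: mG.
move=> /eqP /= lam'E; subst lam'.
have [/and3P [/andP [ok_root _] _ _] /=] := andP mG.
rewrite take0 labels_node; case: ch ok_root mG => // t ch.
rewrite /ok_vertex /= => /andP [/eqP wlam _] mG _.
have GE : DNode lam c (t :: ch) :: G = graft lam c ((t :: ch) ++ G).
  by rewrite /graft -wlam take_size_cat // drop_size_cat.
move: mG; rewrite GE marked1_graft ?size_cat -?wlam ?leq_addr // => /andP [cC pF].
by exists c, ((t :: ch) ++ G).
Qed.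

Lemma marked1_root_in G : marked L l m 1 G -> dlabel (head leaf G) \in L.
Proof.
case: G => [/andP [] // | [lam c ch] G /andP [/and3P [_ labG _]]].
rewrite /= take0 labels_node; case: ch labG => // t ch labG _.
by rewrite -(perm_mem labG) labels_cons labels_node mem_cat inE eqxx.
Qed.

Lemma counts_marked1 (N : nat -> nat) :
  (forall lam, lam \in L -> counts (pruned lam) (N lam)) ->
  counts (marked L l m 1) (\sum_(lam <- L) size (colors k (w lam) (lam == m)) * N lam).
Proof.
move=> cN.
apply: eq_counts (counts_has uL _ (fun lam lL => counts_marked1_root lL (cN lam lL))).
  move=> G; apply/hasP/idP => [[lam _ /andP []] // | mG].
  by exists (dlabel (head leaf G)); rewrite ?mG ?eqxx ?marked1_root_in.
by move=> i j G /andP [_ /eqP <-] /andP [_ /eqP <-].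
Qed.

(* When [lam = m] the pruned forests are all forests on [rem m L]; when moreover
   [rem m L] is empty there is exactly one, made of leaves. *)
Definition npruned lam :=
  if lam != m then w lam * nmarked1 (l + w lam - 1) (rem lam L)
  else if rem m L == [::] then 1 else (l + w m - 1) * nmarked1 (l + w m - 1) (rem m L).

Lemma counts_pruned lam : lam \in L ->
  (forall m' j, m' \in rem lam L -> {in rem lam L, forall x, m' <= x} ->
     j <= l + w lam - 1 ->
     counts (marked (rem lam L) (l + w lam - 1) m' j)
            (j * nmarked1 (l + w lam - 1) (rem lam L))) ->
  counts (pruned lam) (npruned lam).
Proof.
move=> lL IH; rewrite /npruned /pruned; case: eqVneq => [eq_lm | lm] /=.
  subst lam; case: eqVneq => [-> | /exists_min [m' m'L m'_min]].
    apply: eq_counts (counts1 (nseq (l + w m - 1) leaf)) => F.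
    by rewrite wforest_nil andbT.
  apply: eq_counts (IH m' _ m'L m'_min (leqnn _)) => F.
  by rewrite marked_full // andbT.
have mrem : m \in rem lam L by rewrite (mem_rem_uniq _ uL) inE mL eq_sym lm.
have wl : w lam <= l + w lam - 1 by lia.
exact: eq_counts (IH m _ mrem (fun x xL => m_min (mem_rem xL)) wl).
Qed.

Lemma nmarked1_rem n lam : size L = n.+1 -> lam \in L ->
  w lam * nmarked1 (l + w lam - 1) (rem lam L) =
  \prod_(x <- L) w x * \prod_(1 <= i < n) (l + \sum_(x <- L) (w x).-1 + i * k.+1).
Proof.
move=> sizeL lL; rewrite /nmarked1 size_rem // sizeL (big_rem lam lL) mulnA.
rewrite [\sum_(x <- L) _](big_rem lam lL) /=; congr (_ * _); apply: eq_bigr => i _.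
by have := w_gt0 lL; lia.
Qed.

Lemma sum_npruned :
  \sum_(lam <- L) size (colors k (w lam) (lam == m)) * npruned lam = nmarked1 l L.
Proof.
have [n sizeL] : exists n, size L = n.+1 by case: L mL => // x L' _; exists (size L').
have wm := w_gt0 mL; have size_rem_m : size (rem m L) = n by rewrite size_rem // sizeL.
rewrite (big_rem m mL) /= size_colors eqxx addn0 /npruned eqxx /= -size_eq0 size_rem_m.
case: n sizeL size_rem_m => [|n] sizeL size_rem_m.
  rewrite (size0nil size_rem_m) big_nil /nmarked1 (big_rem m mL) (size0nil size_rem_m).
  by rewrite sizeL big_geq //= big_geq // big_nil !muln1 addn0.
rewrite mulnCA (nmarked1_rem sizeL mL).
set W := \prod_(x <- L) w x; set P := \prod_(1 <= i < n.+1) _.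
rewrite (eq_big_seq (fun lam => (w lam + k) * (W * P))); last first.
  move=> lam lrem; have lL := mem_rem lrem.
  have -> : (lam == m) = false.
    by move: lrem; rewrite (mem_rem_uniq _ uL) inE => /andP [/negbTE].
  by rewrite size_colors /= (nmarked1_rem sizeL lL).
rewrite -big_distrl /= /nmarked1 sizeL big_nat_recr //= -/W -/P.
rewrite [\sum_(x <- L) _](big_rem m mL) /=.
have -> : \sum_(x <- rem m L) (w x + k) = \sum_(x <- rem m L) (w x).-1 + n.+1 * k.+1.
  rewrite (eq_big_seq (fun x => (w x).-1 + k.+1)) => [|x /mem_rem /w_gt0]; last lia.
  by rewrite big_split /= big_const_seq count_predT size_rem_m iter_addn_0 mulnC.
have -> : l + w m - 1 = l + (w m).-1 by lia.
ring.
Qed.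
End Graft.

Lemma counts_marked_nmarked1 n L l m j : size L = n -> uniq L ->
  {in L, forall x, 0 < w x} -> m \in L -> {in L, forall x, m <= x} -> 0 < l -> j <= l ->
  counts (marked L l m j) (j * nmarked1 l L).
Proof.
elim: n L l m j => [|n IH] L l m j sizeL uL w_gt0 mL m_min l_gt0 jl.
  by rewrite (size0nil sizeL) in mL.
apply: counts_marked => //; rewrite -(sum_npruned uL mL w_gt0 l_gt0).
apply: counts_marked1 => // lam lL; apply: counts_pruned => // m' j' m'L m'_min jl'.
have wl := w_gt0 _ lL.
apply: IH => //; [by rewrite size_rem // sizeL | exact: rem_uniq | | lia].
by move=> x /mem_rem /w_gt0.
Qed.

Lemma counts_wforest L l : L != [::] -> uniq L -> {in L, forall x, 0 < w x} -> 0 < l ->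
  counts (wforest L l) (l * nmarked1 l L).
Proof.
move=> /exists_min [m mL m_min] uL w_gt0 l_gt0.
have := counts_marked_nmarked1 (erefl _) uL w_gt0 mL m_min l_gt0 (leqnn l).
by apply: eq_counts => F; apply: marked_full.
Qed.
End WeightedForests.

Lemma ell_ofE r :
  ell_of r = (Posz (rr r 0) - Posz (\sum_(1 <= d < size r) d.-1 * rr r d))%R.
Proof.
case: r => [|r0 r]; first by rewrite /ell_of /rr !big_geq.
rewrite /ell_of [in LHS]big_ltn // (big_morph Posz PoszD (erefl (Posz 0))) /=.
rewrite mulN1r opprD opprK.
congr (_ - _)%R; apply: eq_big_nat => d /andP [d1 _].
by rewrite PoszM -(prednK d1) /= -addn1 PoszD addrK.
Qed.

Definition deg_class (r : seq nat) (S : nat -> pred nat) (x : nat) : nat :=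
  head 0 [seq i <- iota 1 (size r) | S i x].

Section DegreeClasses.
Variables (r : seq nat) (S : nat -> pred nat).
Hypothesis rS : inV r S.
Local Notation n := (n_of r).
Local Notation w := (deg_class r S).

Lemma class_bounds i x : 1 <= i -> S i x -> (1 <= x <= n) /\ i < size r.
Proof.
case: rS => _ classes card_classes i1 Six.
have xn : 1 <= x <= n by apply/classes; exists i.
split=> //; rewrite ltnNge; apply/negP => ri.
have := card_classes i i1; rewrite /rr nth_default // => /eqP.
rewrite -leqn0 leqNgt -has_count => /hasP []; exists x; rewrite // mem_iota; lia.
Qed.

Lemma deg_class_spec i x : 1 <= i -> S i x -> w x = i.
Proof.
move=> i1 Six; have [_ ir] := class_bounds i1 Six.
have : i \in [seq j <- iota 1 (size r) | S j x] by rewrite mem_filter Six mem_iota; lia.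
rewrite /deg_class; case E: [seq _ <- _ | _] => [|j js] //= _.
have : j \in [seq j <- iota 1 (size r) | S j x] by rewrite E mem_head.
rewrite mem_filter mem_iota => /andP [Sjx /andP [j1 _]].
case: rS => disj _ _; apply/eqP/negPn/negP => ij.
by case: (disj j i x j1 i1 ij Sjx Six).
Qed.

Lemma deg_class_mem x : x \in iota 1 n -> [/\ 0 < w x, w x < size r & S (w x) x].
Proof.
rewrite mem_iota => xn.
have [i i1 Six] : exists2 i, 0 < i & S i x by case: rS => _ classes _; apply/classes; lia.
by rewrite (deg_class_spec i1 Six); split=> //; case: (class_bounds i1 Six).
Qed.

Lemma count_deg_class d : 0 < d -> count (fun x => w x == d) (iota 1 n) = rr r d.
Proof.
move=> d1; case: rS => _ _ card_classes; rewrite -(card_classes d d1).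
apply: eq_in_count => x /deg_class_mem [_ _ Swx].
by apply/eqP/idP => [<- // | /(deg_class_spec d1)].
Qed.

Lemma deg_class_index x : x \in iota 1 n -> w x \in index_iota 1 (size r).
Proof. by case/deg_class_mem => w1 wr _; rewrite mem_index_iota w1. Qed.

Lemma prod_deg_class : \prod_(x <- iota 1 n) w x = \prod_(1 <= d < size r) d ^ rr r d.
Proof.
rewrite (big_fibers _ (fun d => d) (iota_uniq 1 _) deg_class_index).
apply: eq_big_seq => d; rewrite mem_index_iota => /andP [d1 _].
by rewrite count_deg_class // iter_muln_1.
Qed.

Lemma sum_deg_class :
  \sum_(x <- iota 1 n) (w x).-1 = \sum_(1 <= d < size r) d.-1 * rr r d.
Proof.
rewrite (big_fibers _ predn (iota_uniq 1 _) deg_class_index).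
apply: eq_big_seq => d; rewrite mem_index_iota => /andP [d1 _].
by rewrite count_deg_class // iter_addn_0.
Qed.

Lemma r0_ell : (0 < ell_of r)%R ->
  rr r 0 = `|ell_of r|%N + \sum_(x <- iota 1 n) (w x).-1.
Proof.
move=> ell_gt0; apply/eqP; rewrite -eqz_nat PoszD gtz0_abs // sum_deg_class ell_ofE.
by rewrite subrK.
Qed.

Section ForestType.
Variable F : seq dtree.
Local Notation V := (fvertices F).
Hypotheses (degF : {in filter internal V, forall v, ddeg v = w (dlabel v)})
  (labF : perm_eq (labels F) (iota 1 n)).

Lemma count_leaves :
  count (fun v => ddeg v == 0) V = size F + \sum_(x <- iota 1 n) (w x).-1.
Proof.
have sum_deg : \sum_(v <- V) ddeg v = \sum_(x <- iota 1 n) w x.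
  rewrite -(perm_big _ labF) /labels big_map big_filter [RHS]big_mkcond /=.
  apply: eq_big_seq => v vV; case: ifP => vint; first by rewrite degF // mem_filter vint.
  by move: vint; rewrite /internal lt0n => /negbFE /eqP.
have sum_w : \sum_(x <- iota 1 n) w x = n + \sum_(x <- iota 1 n) (w x).-1.
  rewrite (eq_big_seq (fun x => 1 + (w x).-1)) => [|x /deg_class_mem [w1 _ _]]; last lia.
  by rewrite big_split sum1_size size_iota.
have nint : count internal V = n.
  by rewrite -size_filter -(size_map dlabel) (perm_size labF) size_iota.
have := size_fvertices F; rewrite -(count_predC internal) nint sum_deg sum_w.
suff -> : count (predC internal) V = count (fun v => ddeg v == 0) V by lia.
by apply: eq_count => v; rewrite /= /internal lt0n negbK.
Qed.

Lemma count_deg i : 0 < i -> count (fun v => ddeg v == i) V = rr r i.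
Proof.
move=> i1; rewrite -count_deg_class // -(permP labF) /labels count_map count_filter.
apply: eq_in_count => v vV /=; case vint: (internal v).
  by rewrite andbT degF // mem_filter vint.
by move: vint; rewrite andbF /internal lt0n => /negbFE /eqP ->; rewrite eq_sym eqn0Ngt i1.
Qed.
End ForestType.

Lemma CF_wforest k F : (0 < ell_of r)%R ->
  CF r k S F <-> wforest k w (iota 1 n) `|ell_of r|%N F.
Proof.
move=> ell_gt0; split.
- case=> leavesF typeF labF colF classF.
  have degF : {in filter internal (fvertices F), forall v, ddeg v = w (dlabel v)}.
    move=> v vint; have := allP classF v vint.
    by move: vint; rewrite mem_filter => /andP [vint _] /(deg_class_spec vint).
  apply/and3P; split=> //.
    apply/allP => v vV; rewrite /ok_vertex; case: ifP => vint.
      by rewrite degF ?mem_filter ?vint // eqxx (allP colF) // mem_filter vint.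
    rewrite -leaf_canonical ?vint //.
    by have := allP leavesF v; rewrite mem_filter vint vV => /(_ isT).
  have := count_leaves degF labF; rewrite typeF (r0_ell ell_gt0) => /eqP.
  by rewrite eqn_add2r eq_sym.
- case/and3P=> okF labF /eqP sizeF.
  have degF : {in filter internal (fvertices F), forall v, ddeg v = w (dlabel v)}.
    move=> v; rewrite mem_filter => /andP [vint /(allP okF)].
    by rewrite /ok_vertex vint => /andP [/eqP].
  split=> //.
  + apply/allP => v; rewrite mem_filter => /andP [vint /(allP okF)].
    by rewrite /ok_vertex (negbTE vint) leaf_canonical.
  + case=> [|i]; last exact: count_deg.
    by rewrite (count_leaves degF labF) sizeF (r0_ell ell_gt0).
  + apply/allP => v; rewrite mem_filter => /andP [vint /(allP okF)].
    by rewrite /ok_vertex vint => /andP [].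
  + apply/allP => v vint; rewrite degF //.
    have : dlabel v \in iota 1 n by rewrite -(perm_mem labF); apply: map_f.
    by case/deg_class_mem.
Qed.
End DegreeClasses.

Local Open Scope ring_scope.

Theorem theorem3p5 (r : seq nat) (k : nat) (S : nat -> pred nat) :
  (1 <= n_of r)%N -> 1 <= ell_of r -> inV r S ->
  exists N : nat, has_card (CF r k S) N /\
    (N%:Z = ell_of r * (\prod_(1 <= d < size r) d ^ rr r d)%N%:Z
                     * (\prod_(1 <= i < n_of r) (rr r 0 + i * k.+1))%N%:Z).
Proof.
move=> n_gt0 ell_ge1 rS; have ell_gt0 : 0 < ell_of r by lia.
set w := deg_class r S; set l := `|ell_of r|%N.
have labels_ne : iota 1 (n_of r) != [::] by rewrite -size_eq0 size_iota -lt0n.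
have w_gt0 : {in iota 1 (n_of r), forall x, (0 < w x)%N}.
  by move=> x /(deg_class_mem rS) [].
have l_gt0 : (0 < l)%N by rewrite /l absz_gt0; lia.
have cnt := counts_wforest k labels_ne (iota_uniq 1 _) w_gt0 l_gt0.
exists (l * nmarked1 k w l (iota 1 (n_of r)))%N; split.
  exact: counts_has_card (fun F => CF_wforest rS k F ell_gt0) cnt.
rewrite /nmarked1 size_iota -(r0_ell rS ell_gt0) (prod_deg_class rS) !PoszM mulrA.
by rewrite gtz0_abs.
Qed.
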